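(* There is no element of $\mathcal{D}'$ strictly between $\sqrt3$ and $\frac{7+\sqrt{13}}{6}$.
   Context: For an infinite word $w$ with infinitely many palindromic prefixes (the empty word counting as one), let $(n_i)_{i\ge1}$ be the increasing sequence of their lengths and $\delta(w)=\limsup n_{i+1}/n_i$. Characteristic Sturmian word: for positive integers $s_1,s_2,\dots$ and letters $a\ne b$, let $\sigma_0=a$, $\sigma_1=a^{s_1-1}b$, $\sigma_n=\sigma_{n-1}^{s_n}\sigma_{n-2}$ ($n\ge2$); the limit of the $\sigma_n$ is the characteristic Sturmian word of slope $[0;s_1,s_2,\dots]$. $\mathcal{D}'$ is the set of values $\delta(w)$ where $w$ is either a periodic word with a palindromic period (i.e. $w=uuu\cdots$ with $u$ a nonempty palindrome) or a characteristic Sturmian word. *)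

From HB Require Import structures.
From mathcomp Require Import all_boot all_order all_algebra.
From mathcomp Require Import all_classical all_reals all_analysis.
Set Implicit Arguments. Unset Strict Implicit. Unset Printing Implicit Defensive.
Import Order.TTheory GRing.Theory Num.Theory.
Local Open Scope ring_scope.

Definition word (T : Type) := nat -> T.

Section Words.
Variable T : eqType.

Definition pal_prefix (w : word T) (n : nat) : bool :=
  all (fun i => w i == w (n.-1 - i)%N) (iota 0 n).

Definition inf_pal (w : word T) : Prop :=
  forall m : nat, exists n : nat, (m <= n)%N /\ pal_prefix w n.

(* smallest palindromic-prefix length > m (0 if none; irrelevant under inf_pal) *)
Definition next_pal (w : word T) (m : nat) : nat :=
  match boolp.pselect (exists n, (m < n)%N && pal_prefix w n) with
  | left h => ex_minn h
  | right _ => 0%N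
  end.

(* pal_len w i = n_{i+1}: the increasing enumeration of palindromic-prefix
   lengths, starting with n_1 = 0 (the empty prefix). *)
Definition pal_len (w : word T) (i : nat) : nat := iter i (next_pal w) 0%N.

(* delta(w) = limsup_i n_{i+1}/n_i, as an extended real (may be +oo).
   The term with n_1 = 0 in the denominator is a single term and does not
   affect the limsup. *)
Definition delta (R : realType) (w : word T) : \bar R :=
  limn_esup (fun i => (((pal_len w i.+1)%:R / (pal_len w i)%:R : R))%:E).

Definition periodic_pal (w : word T) : Prop :=
  exists u : seq T, [/\ u != [::], rev u = u &
     forall i, w i = nth (w i) u (i %% size u)].

(* sigma_n of the standard sequence with directive sequence s_1, s_2, ...
   (s 0 unused). *)
Fixpoint sigma_pair (s : nat -> nat) (a b : T) (n : nat) : seq T * seq T :=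
  (* returns (sigma_n, sigma_{n+1}) *)
  match n with
  | 0 => ([:: a], rcons (nseq (s 1%N).-1 a) b)
  | n'.+1 => let p := sigma_pair s a b n' in
             (p.2, flatten (nseq (s n'.+2) p.2) ++ p.1)
  end.

Definition sigma (s : nat -> nat) (a b : T) (n : nat) : seq T :=
  (sigma_pair s a b n).1.

Definition char_sturmian (s : nat -> nat) (a b : T) (w : word T) : Prop :=
  forall i : nat, exists N : nat, forall n : nat, (N <= n)%N ->
    (i < size (sigma s a b n))%N /\ w i = nth (w i) (sigma s a b n) i.

Definition is_char_sturmian (w : word T) : Prop :=
  exists (s : nat -> nat) (a b : T),
    [/\ forall i, (0 < s i.+1)%N, a != b & char_sturmian s a b w].

End Words.

Definition Dprime (R : realType) : set (\bar R) :=
  [set x | exists (T : eqType) (w : word T),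
     [/\ inf_pal w, periodic_pal w \/ is_char_sturmian w & x = delta R w]].
Arguments Dprime R : clear implicits.
Arguments delta {T} R w.

(* Palindromic prefixes of a periodic word [u u u ...] with [u] a palindrome
   include all multiples of [|u|], so eventually [n_{i+1} <= n_i + |u|] and
   [delta <= 3/2 < sqrt 3].  For a characteristic Sturmian word with standard
   words [sigma_n], put [q_m = |sigma_{m+1}|], [p_m = |sigma_m|]; the palindromic
   prefixes are exactly the central words of lengths
   [k q_m + q_m + p_m - 2], [0 <= k <= s_{m+2}], so
   [delta = limsup_m (1 + q_m / (q_m + p_m - 2))].  The ratios
   [r_m = p_m / q_m] satisfy [r_{m+1} = 1 / (s_{m+2} + r_m)].  If
   [r_m <= beta = (sqrt 13 - 3) / 2] infinitely often, then
   [delta >= 1 + 1 / (1 + beta) = (7 + sqrt 13) / 6].  Otherwise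
   [s_{m+2} <= 2] eventually, which forces [liminf r_m >= alpha] with
   [alpha = (sqrt 3 - 1) / 2], and
   [delta <= 1 + 1 / (1 + alpha) = sqrt 3]. *)

From HB Require Import structures.
From mathcomp Require Import all_boot all_order all_algebra.
From mathcomp Require Import all_classical all_reals all_analysis.
From mathcomp Require Import zify ring lra.
Set Implicit Arguments. Unset Strict Implicit. Unset Printing Implicit Defensive.
Import Order.TTheory GRing.Theory Num.Theory.
Local Open Scope ring_scope.

Section LimnEsup.
Variable R : realType.
Local Open Scope ereal_scope.
Local Open Scope classical_set_scope.
Implicit Types (u : (\bar R)^nat) (c : \bar R).

Lemma limn_esup_le_eventually u c N :
  (forall n, (N <= n)%N -> u n <= c) -> limn_esup u <= c.
Proof.
move=> ub; rewrite /limn_esup limf_esupE.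
apply: ge_ereal_inf; exists (ereal_sup (u @` [set n | (N <= n)%N])).
  by exists [set n | (N <= n)%N] => //; exists N.
by apply: ge_ereal_sup => _ [n /= Nn <-]; exact: ub.
Qed.

Lemma limn_esup_ge_frequently u c :
  (forall N, exists2 n, (N <= n)%N & c <= u n) -> c <= limn_esup u.
Proof.
move=> lb; rewrite /limn_esup limf_esupE.
apply: le_ereal_inf_tmp => _ [V [N _ NV] <-].
have [n Nn cn] := lb N.
by apply: le_ereal_sup_tmp; exists (u n) => //; exists n => //; exact: NV.
Qed.

End LimnEsup.

Section PalindromicPrefixes.
Variables (T : eqType) (w : word T).
Local Open Scope nat_scope.

Lemma pal_prefixP n :
  reflect (forall i, i < n -> w i = w (n.-1 - i)) (pal_prefix w n).
Proof.
apply: (iffP allP) => [pal i lt_in|pal i].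
  by apply/eqP; apply: pal; rewrite mem_iota.
by rewrite mem_iota add0n => /andP[_ lt_in]; apply/eqP; apply: pal.
Qed.

(* Two palindromic prefixes of lengths l and l + d force the period d on the
   longer one; reflecting through it yields the palindromic prefix l - d. *)
Lemma pal_prefix_shift l d :
  pal_prefix w l -> pal_prefix w (l + d) -> 0 < d <= l ->
  pal_prefix w (l - d) /\ w (l - d) = w l.
Proof.
move=> /pal_prefixP pal_l /pal_prefixP pal_ld /andP[d_gt0 le_dl].
have period i : i < l -> w (i + d) = w i.
  move=> lt_il; rewrite pal_ld; last by lia.
  have -> : (l + d).-1 - (i + d) = l.-1 - i by lia.
  by rewrite -pal_l.
split; last by rewrite -[in RHS](subnK le_dl) period //; lia.
apply/pal_prefixP => i lt_i.
rewrite -(period ((l - d).-1 - i)); last by lia.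
have -> : (l - d).-1 - i + d = l.-1 - i by lia.
by rewrite -pal_l //; lia.
Qed.

(* By [pal_prefix_shift], a palindromic prefix in (l, l + q) would reflect to
   one in (l - q, l) followed by the letter [w l]. *)
Lemma pal_prefix_gap l q :
  pal_prefix w l -> 0 < q <= l.+1 ->
  (forall j, l < j + q -> j < l -> pal_prefix w j -> w j != w l) ->
  forall m, l < m < l + q -> ~~ pal_prefix w m.
Proof.
move=> pal_l /andP[q_gt0 le_ql] letter_neq m /andP[lt_lm lt_mq].
apply/negP => pal_m.
have [pal_j w_j] : pal_prefix w (l - (m - l)) /\ w (l - (m - l)) = w l.
  by apply: pal_prefix_shift; rewrite ?subnKC ?(ltnW lt_lm) //; lia.
have : w (l - (m - l)) != w l by apply: letter_neq => //; lia.
by rewrite w_j eqxx.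
Qed.

Hypothesis w_inf : inf_pal w.

Lemma next_palP m :
  [/\ m < next_pal w m, pal_prefix w (next_pal w m) &
      forall j, m < j < next_pal w m -> ~~ pal_prefix w j].
Proof.
rewrite /next_pal; case: boolp.pselect => [ex|nex]; last first.
  by have [n [le_mn pal_n]] := w_inf m.+1; case: nex; exists n; rewrite le_mn.
case: ex_minnP => n /andP[lt_mn pal_n] min_n; split => // j /andP[lt_mj lt_jn].
by apply/negP => pal_j; have := min_n j; rewrite lt_mj pal_j => /(_ isT); lia.
Qed.

Lemma pal_lenS i : pal_len w i.+1 = next_pal w (pal_len w i).
Proof. by []. Qed.

Lemma pal_len_pal i : pal_prefix w (pal_len w i).
Proof. by case: i => [|i] //; case: (next_palP (pal_len w i)). Qed.

Lemma pal_len_lt i : pal_len w i < pal_len w i.+1.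
Proof. by case: (next_palP (pal_len w i)). Qed.

Lemma pal_len_ge i : i <= pal_len w i.
Proof. by elim: i => // i IHi; apply: leq_ltn_trans (pal_len_lt i). Qed.

Lemma next_pal_eq l l' :
  pal_prefix w l' -> l < l' -> (forall j, l < j < l' -> ~~ pal_prefix w j) ->
  next_pal w l = l'.
Proof.
move=> pal_l' lt_ll' gap; case: (next_palP l) => lt_l pal_next gap_next.
apply/eqP; rewrite eqn_leq; apply/andP; split; rewrite leqNgt; apply/negP.
  by move=> lt_l'n; have := gap_next l'; rewrite lt_ll' lt_l'n pal_l' => /(_ isT).
by move=> lt_nl'; have := gap (next_pal w l); rewrite lt_l lt_nl' pal_next => /(_ isT).
Qed.

Lemma pal_len_bracket l : exists i, pal_len w i <= l < pal_len w i.+1.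
Proof.
elim: l => [|l [i /andP[le_il lt_li]]]; first by exists 0; rewrite /= (pal_len_lt 0).
have [lt_l1|] := ltnP l.+1 (pal_len w i.+1); first by exists i; rewrite lt_l1; lia.
by exists i.+1; have := pal_len_lt i.+1; lia.
Qed.

Lemma pal_len_consecutive l l' :
  pal_prefix w l -> pal_prefix w l' -> l < l' ->
  (forall j, l < j < l' -> ~~ pal_prefix w j) ->
  exists i, pal_len w i = l /\ pal_len w i.+1 = l'.
Proof.
move=> pal_l pal_l' lt_ll' gap; have [i /andP[le_il lt_li]] := pal_len_bracket l.
have len_i : pal_len w i = l.
  apply/eqP; rewrite eqn_leq le_il leqNgt; apply/negP => lt_il.
  have [_ _ gap_i] := next_palP (pal_len w i).
  by have := gap_i l; rewrite lt_il -pal_lenS lt_li pal_l => /(_ isT).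
by exists i; rewrite pal_lenS len_i (next_pal_eq pal_l' lt_ll' gap).
Qed.

End PalindromicPrefixes.

Section Constants.
Variable R : realType.

(* As continued fractions, [alpha = [0; 2, 1, 2, 1, ...]] and
   [beta = [0; 3, 3, 3, ...]]. *)
Definition alpha : R := (Num.sqrt 3 - 1) / 2.
Definition beta : R := (Num.sqrt 13 - 3) / 2.

Lemma sqr_sqrt_nat (n : nat) : Num.sqrt (n%:R : R) * Num.sqrt n%:R = n%:R.
Proof. by rewrite -expr2 sqr_sqrtr ?ler0n. Qed.

Lemma sqrt3_bounds : 17 / 10 < Num.sqrt (3 : R) < 7 / 4.
Proof.
have := sqr_sqrt_nat 3; have := @sqrtr_ge0 R 3 => ge0 sq.
by apply/andP; split; nra.
Qed.

Lemma sqrt13_bounds : 36 / 10 < Num.sqrt (13 : R) < 361 / 100.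
Proof.
have := sqr_sqrt_nat 13; have := @sqrtr_ge0 R 13 => ge0 sq.
by apply/andP; split; nra.
Qed.

Lemma alpha_root : 2 * alpha ^+ 2 + 2 * alpha = 1.
Proof. by have := sqr_sqrt_nat 3; rewrite /alpha expr2; nra. Qed.

Lemma beta_root : beta ^+ 2 + 3 * beta = 1.
Proof. by have := sqr_sqrt_nat 13; rewrite /beta expr2; nra. Qed.

Lemma alpha_bounds : 35 / 100 < alpha < 38 / 100.
Proof. by have /andP[lo hi] := sqrt3_bounds; rewrite /alpha; apply/andP; split; lra. Qed.

Lemma beta_bounds : 3 / 10 < beta < 31 / 100.
Proof. by have /andP[lo hi] := sqrt13_bounds; rewrite /beta; apply/andP; split; lra. Qed.

End Constants.

Section PeriodicWords.
Variables (T : eqType) (w : word T) (u : seq T).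
Hypotheses (u_neq0 : u != [::]) (pal_u : rev u = u).
Hypothesis w_per : forall i, w i = nth (w i) u (i %% size u).
Local Open Scope nat_scope.

Lemma pal_prefix_period_mul k : pal_prefix w (k * size u).
Proof.
set n := size u; have n_gt0 : 0 < n by rewrite lt0n size_eq0.
apply/pal_prefixP => i lt_i; rewrite w_per [in RHS]w_per -/n.
set Q := i %/ n; set r := i %% n.
have lt_rn : r < n by rewrite ltn_pmod.
have eq_i : i = Q * n + r by rewrite /Q /r -divn_eq.
have lt_Qk : Q < k by rewrite ltn_divLR.
have -> : (k * n).-1 - i = (k - Q - 1) * n + (n.-1 - r).
  by rewrite eq_i [in LHS](_ : k = k - Q - 1 + Q + 1) ?mulnDl; lia.
rewrite modnMDl modn_small; last by lia.
rewrite -[in RHS]pal_u nth_rev -/n; last by lia.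
rewrite (_ : n - (n.-1 - r).+1 = r); last by lia.
exact: set_nth_default.
Qed.

Hypothesis w_inf : inf_pal w.
Variable R : realType.

(* Consecutive palindromic prefixes differ by at most the period, so
   eventually [n_{i+1} / n_i <= 1 + 1/2]. *)
Lemma delta_periodic_le : (delta R w <= (Num.sqrt 3)%:E)%E.
Proof.
have u_gt0 : 0 < size u by rewrite lt0n size_eq0.
apply: (@limn_esup_le_eventually R _ _ (2 * size u)) => i le_i.
have le_l := leq_trans le_i (pal_len_ge w_inf i); set l := pal_len w i in le_l *.
have next_le : pal_len w i.+1 <= l + size u.
  have [lt_l _ gap] := next_palP w_inf l.
  have lt_K : l < (l %/ size u).+1 * size u by rewrite ltn_ceil.
  have le_K : (l %/ size u).+1 * size u <= l + size u.
    by rewrite mulSn addnC leq_add2r leq_divM.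
  rewrite pal_lenS leqNgt; apply/negP => lt_next.
  have := gap ((l %/ size u).+1 * size u); rewrite pal_prefix_period_mul lt_K /=.
  by move/(_ (leq_ltn_trans le_K lt_next)).
have sqrt3_ge : 3 / 2 <= Num.sqrt 3 :> R by have /andP[lo _] := sqrt3_bounds R; lra.
rewrite lee_fin; apply: le_trans _ sqrt3_ge.
rewrite ler_pdivrMr ?ltr0n; last by lia.
have : (2 * pal_len w i.+1)%:R <= (3 * l)%:R :> R by rewrite ler_nat; lia.
by rewrite !natrM; lra.
Qed.

End PeriodicWords.

Section ContinuedFractionRatios.
Variable R : realType.
Variables (d q p : nat -> nat).
Hypotheses (d_gt0 : forall m, (0 < d m)%N) (q_gt0 : forall m, (0 < q m)%N).
Hypothesis p_gt0 : forall m, (0 < p m)%N.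
Hypotheses (qS : forall m, q m.+1 = (d m * q m + p m)%N) (pS : forall m, p m.+1 = q m).

Definition ratio m : R := (p m)%:R / (q m)%:R.

(* For Sturmian words, the largest quotient [n_{i+1} / n_i] of consecutive
   palindromic prefix lengths at level [m]. *)
Definition top_ratio m : R := 1 + (q m)%:R / (q m + p m - 2)%:R.

Lemma ratio_ge0 m : 0 <= ratio m.
Proof. by rewrite divr_ge0 ?ler0n. Qed.

Lemma ratioS m : ratio m.+1 = 1 / ((d m)%:R + ratio m).
Proof.
have q_neq0 : (q m)%:R != 0 :> R by rewrite pnatr_eq0 -lt0n.
have qS_neq0 : (d m * q m + p m)%:R != 0 :> R by rewrite pnatr_eq0 -lt0n -qS.
rewrite /ratio pS qS natrD natrM; field.
by rewrite q_neq0 -natrM -natrD qS_neq0.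
Qed.

Lemma ratioS_le1 m : ratio m.+1 <= 1.
Proof.
rewrite /ratio ler_pdivrMr ?ltr0n ?q_gt0 // mul1r ler_nat pS qS.
by apply: leq_trans (leq_addr _ _); apply: leq_pmull.
Qed.

Lemma qpS_ge3 m : (3 <= q m.+1 + p m.+1)%N.
Proof. by rewrite qS pS; have := d_gt0 m; have := q_gt0 m; have := p_gt0 m; nia. Qed.

Lemma q_gt_index m : (m < q m)%N.
Proof. by elim: m => [|m IHm]; rewrite ?qS ?q_gt0 //; have := d_gt0 m; have := p_gt0 m; nia. Qed.

(* [top_ratio m >= 1 + 1 / (1 + ratio m)] and
   [1 + 1 / (1 + beta) = (7 + sqrt 13) / 6]. *)
Lemma top_ratio_ge m : (3 <= q m + p m)%N -> ratio m <= beta R ->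
  (7 + Num.sqrt 13) / 6 <= top_ratio m.
Proof.
move=> qp_ge3 small; have q_pos : 0 < (q m)%:R :> R by rewrite ltr0n.
rewrite /ratio ler_pdivrMr // in small.
have qp_pos : (q m + p m - 2)%:R = (q m)%:R + (p m)%:R - 2 :> R by rewrite natrB ?natrD //; lia.
have qp_ge3R : 3 <= (q m)%:R + (p m)%:R :> R by rewrite -natrD (ler_nat _ 3).
rewrite /top_ratio qp_pos -lerBlDl ler_pdivlMr; last by lra.
have sqrt13_ge0 := @sqrtr_ge0 R 13; have sqrt13_sq := sqr_sqrt_nat R 13.
have : (1 + Num.sqrt 13) / 6 * ((p m)%:R - beta R * (q m)%:R) <= 0.
  by rewrite mulr_ge0_le0 //; lra.
rewrite /beta; nra.
Qed.

(* [beta = 1 / (3 + beta)], so [d m >= 3] would give [ratio m.+1 < beta]. *)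
Lemma d_le2 m : beta R < ratio m -> beta R < ratio m.+1 -> (d m <= 2)%N.
Proof.
move=> big big1; rewrite leqNgt; apply/negP => d_gt2.
have d_ge3 : 3 <= (d m)%:R :> R by rewrite (ler_nat _ 3).
have r_ge0 := ratio_ge0 m; have /andP[lo hi] := beta_bounds R; have root := beta_root R.
rewrite ratioS ltr_pdivlMr in big1; last by lra.
have : beta R * (3 + beta R) < beta R * ((d m)%:R + ratio m) by rewrite ltr_pM2l; lra.
by rewrite expr2 in root; nra.
Qed.

(* Among partial quotients in {1, 2}, the pattern [d m = 1, d m.+1 = 2]
   is the only one that can keep [ratio m.+2] below [alpha]; there
   [ratio m.+2 = (1 + ratio m) / (3 + 2 ratio m)], a contraction by a
   factor at least 9 around its fixed point [alpha]. *)
Lemma alpha_gap_halves m t : (d m <= 2)%N -> (d m.+1 <= 2)%N -> 0 <= t ->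
  alpha R - ratio m <= t -> alpha R - ratio m.+2 <= t / 2.
Proof.
move=> dm_le2 dm1_le2 t_ge0 gap; have /andP[lo hi] := alpha_bounds R.
have r_ge0 := ratio_ge0 m; have r1_ge0 := ratio_ge0 m.+1; have r1_le1 := ratioS_le1 m.
have [d1_eq1|d1_eq2] : d m.+1 = 1%N \/ d m.+1 = 2%N by have := d_gt0 m.+1; lia.
  suff : 1 / 2 <= ratio m.+2 by lra.
  by rewrite ratioS d1_eq1 ler_pdivlMr; lra.
have [d_eq2|d_eq1] : d m = 2%N \/ d m = 1%N by have := d_gt0 m; lia.
  have r1_le : ratio m.+1 <= 1 / 2 by rewrite ratioS d_eq2 ler_pdivrMr; lra.
  suff : 2 / 5 <= ratio m.+2 by lra.
  by rewrite ratioS d1_eq2 ler_pdivlMr; lra.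
have root := alpha_root R; rewrite expr2 in root.
set r := ratio m in r_ge0 gap *; have den_gt0 : 0 < 3 + 2 * r by lra.
have -> : ratio m.+2 = (1 + r) / (3 + 2 * r).
  rewrite !ratioS d1_eq2 d_eq1 -/r; field.
  by apply/andP; split; apply: lt0r_neq0; lra.
have -> : alpha R - (1 + r) / (3 + 2 * r) = ((3 + 2 * r) * alpha R - 1 - r) / (3 + 2 * r).
  by field; apply: lt0r_neq0.
have key : (3 + 2 * alpha R) * ((3 + 2 * r) * alpha R - 1 - r) =
    alpha R - r + (3 + 2 * r) * (2 * (alpha R * alpha R) + 2 * alpha R - 1) by ring.
rewrite root subrr mulr0 addr0 in key.
by rewrite ler_pdivrMr //; nra.
Qed.

Lemma alpha_gap_le M : (forall m, (M <= m)%N -> (d m <= 2)%N) ->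
  forall k m, (M + 2 * k <= m)%N -> alpha R - ratio m <= 1 / (k.+1)%:R.
Proof.
move=> d_small; elim=> [|k IHk] m le_m.
  by have := ratio_ge0 m; have /andP[_ hi] := alpha_bounds R; rewrite divr1; lra.
case: m le_m => [|[|m]] le_m; [by exfalso; lia | by exfalso; lia |].
have t_ge0 : 0 <= 1 / (k.+1)%:R :> R by rewrite divr_ge0 ?ler0n.
have := alpha_gap_halves (d_small m (ltac:(lia))) (d_small m.+1 (ltac:(lia)))
  t_ge0 (IHk m (ltac:(lia))).
move/le_trans; apply.
rewrite -mulrA -invfM ler_pdivrMr ?mulr_gt0 ?ltr0n // mul1r.
by rewrite -natrM mulrC ler_pdivlMr ?ltr0n // mul1r ler_nat; lia.
Qed.

(* [1 + 1 / (1 + alpha) = sqrt 3]; the errors [e / 8] on the ratio and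
   [2 / q m <= e / 4] in the denominator cost at most [e]. *)
Lemma top_ratio_le m (e : R) : 0 < e <= 1 -> (3 <= q m + p m)%N ->
  alpha R - e / 8 <= ratio m -> 8 / e <= (q m)%:R -> top_ratio m <= Num.sqrt 3 + e.
Proof.
move=> /andP[e_gt0 e_le1] qp_ge3 near_alpha q_big.
have q_pos : 0 < (q m)%:R :> R by rewrite ltr0n.
rewrite /ratio ler_pdivlMr // in near_alpha.
rewrite ler_pdivrMr // in q_big.
have qp_pos : (q m + p m - 2)%:R = (q m)%:R + (p m)%:R - 2 :> R by rewrite natrB ?natrD //; lia.
have qp_ge3R : 3 <= (q m)%:R + (p m)%:R :> R by rewrite -natrD (ler_nat _ 3).
have /andP[lo hi] := alpha_bounds R; have root := alpha_root R; rewrite expr2 in root.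
have -> : Num.sqrt 3 + e = 1 + (2 * alpha R + e) by rewrite /alpha; field.
rewrite /top_ratio qp_pos lerD2l ler_pdivrMr; last by lra.
nra.
Qed.

Lemma top_ratio_le_eventually M : (forall m, (M <= m)%N -> (d m <= 2)%N) ->
  forall e : R, 0 < e -> exists N, forall m, (N <= m)%N -> top_ratio m <= Num.sqrt 3 + e.
Proof.
move=> d_small e e_gt0; wlog e_le1 : e e_gt0 / e <= 1.
  move=> small_e; have [|e_gt1] := leP e 1; first exact: small_e.
  have [N top_le] := small_e 1 ltr01 (lexx 1).
  by exists N => m le_Nm; apply: le_trans (top_le m le_Nm) _; rewrite lerD2l ltW.
have [n n_big] : exists n : nat, 8 / e < n%:R.
  have e8_ge0 : 0 <= 8 / e by rewrite divr_ge0 // ltW.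
  by exists (Num.truncn (8 / e)).+1; case/andP: (truncn_itv e8_ge0).
exists (M + 2 * n).+1 => -[//|m] le_m; apply: top_ratio_le; rewrite ?e_gt0 ?qpS_ge3 //.
  suff n_small : 1 / (n.+1)%:R <= e / 8.
    by have := le_trans (alpha_gap_le d_small (ltnW le_m)) n_small; lra.
  rewrite ltr_pdivrMr // in n_big.
  by rewrite ler_pdivrMr ?ltr0n // -[(n.+1)%:R]natr1; nra.
apply: le_trans (ltW n_big) _; rewrite ler_nat.
by apply: leq_trans (q_gt_index m.+1); lia.
Qed.

Lemma top_ratio_dichotomy :
  (forall M, exists2 m, (M <= m)%N & (7 + Num.sqrt 13) / 6 <= top_ratio m) \/
  (forall e : R, 0 < e -> exists N, forall m, (N <= m)%N -> top_ratio m <= Num.sqrt 3 + e).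
Proof.
have [small|] := boolp.pselect (forall M, exists2 m, (M <= m)%N & ratio m <= beta R).
  left => M; have [[|m] le_m r_small] := small M.+1; first by [].
  by exists m.+1; [exact: ltnW | exact: top_ratio_ge (qpS_ge3 m) r_small].
move=> /boolp.existsNP[M no_small]; right.
have big m : (M <= m)%N -> beta R < ratio m.
  by move=> le_m; rewrite ltNge; apply/negP => r_small; apply: no_small; exists m.
by apply: (@top_ratio_le_eventually M) => m le_m; apply: d_le2; apply: big; lia.
Qed.

End ContinuedFractionRatios.

Section WordPowers.
Variable T : eqType.
Implicit Types u v z : seq T.
Local Open Scope nat_scope.

Definition wpow u k := flatten (nseq k u).

Lemma wpowS u k : wpow u k.+1 = u ++ wpow u k.
Proof. by []. Qed.

Lemma wpowSr u k : wpow u k.+1 = wpow u k ++ u.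
Proof. by elim: k => [|k IHk]; rewrite wpowS ?cats0 // {1}IHk catA -wpowS. Qed.

Lemma wpowD u k l : wpow u (k + l) = wpow u k ++ wpow u l.
Proof. by elim: k => // k IHk; rewrite addSn !wpowS IHk catA. Qed.

Lemma size_wpow u k : size (wpow u k) = k * size u.
Proof. by elim: k => // k IHk; rewrite wpowS size_cat IHk mulSn. Qed.

Lemma rev_wpow u k : rev (wpow u k) = wpow (rev u) k.
Proof. by elim: k => // k IHk; rewrite wpowS rev_cat IHk -wpowSr. Qed.

Lemma wpow_conj u z k :
  u ++ z = z ++ rev u -> wpow u k ++ z = z ++ wpow (rev u) k.
Proof.
move=> conj_u; elim: k => [|k IHk]; first by rewrite cats0.
by rewrite wpowS -catA IHk catA conj_u -catA -wpowS.
Qed.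

Lemma rev_wpow_conj u z k :
  rev z = z -> u ++ z = z ++ rev u -> rev (wpow u k ++ z) = wpow u k ++ z.
Proof.
by move=> pal_z conj_u; rewrite [in LHS](wpow_conj k conj_u) rev_cat rev_wpow revK pal_z.
Qed.

Lemma conj_swap u v z x y :
  rev z = z -> u ++ v = z ++ [:: x; y] -> v ++ u = z ++ [:: y; x] ->
  v ++ z = z ++ rev v -> u ++ z = z ++ rev u.
Proof.
move=> pal_z uv vu conj_v.
have revuv : rev u ++ rev v = [:: x; y] ++ z by rewrite -rev_cat vu rev_cat pal_z.
have : (z ++ rev u) ++ rev v == (u ++ z) ++ rev v.
  by rewrite -catA revuv catA -uv -catA conj_v catA.
by rewrite eqseq_cat ?size_cat ?size_rev 1?addnC // eqxx andbT eq_sym => /eqP.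
Qed.

End WordPowers.

Section SturmianWords.
Variables (T : eqType) (s : nat -> nat) (a b : T).
Hypothesis s_gt0 : forall i, (0 < s i.+1)%N.
Local Open Scope nat_scope.
Local Notation sig := (sigma s a b).

Lemma sigma1 : sig 1 = rcons (nseq (s 1).-1 a) b.
Proof. by []. Qed.

Lemma sigmaSS n : sig n.+2 = wpow (sig n.+1) (s n.+2) ++ sig n.
Proof. by []. Qed.

(* [central m] is [sig m.+1 ++ sig m] without its last two letters
   (see [sigma_swap]), a palindrome. *)
Fixpoint central m :=
  if m is m'.+1 then wpow (sig m'.+1) (s m'.+2) ++ central m'
  else nseq (s 1).-1 a.

Definition xlet m := if odd m then a else b.
Definition ylet m := if odd m then b else a.

Lemma sigma_swap m :
  sig m.+1 ++ sig m = central m ++ [:: xlet m; ylet m] /\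
  sig m ++ sig m.+1 = central m ++ [:: ylet m; xlet m].
Proof.
elim: m => [|m [IH1 IH2]].
  rewrite sigma1 /= /xlet /ylet cat_rcons; split => //.
  by have := s_gt0 0; case: (s 1) => // k _; elim: k => //= k ->.
rewrite sigmaSS; split; first by rewrite -catA IH2 catA /xlet /ylet /=; case: (odd m).
by rewrite catA -wpowS wpowSr -catA IH1 catA /xlet /ylet /=; case: (odd m).
Qed.

Lemma central_rev_conj m :
  rev (central m) = central m /\
  sig m.+1 ++ central m = central m ++ rev (sig m.+1).
Proof.
elim: m => [|m [pal_z conj_z]].
  by rewrite sigma1 /= rev_nseq rev_rcons rev_nseq cat_rcons.
have pal_zS : rev (central m.+1) = central m.+1 by rewrite /= rev_wpow_conj.
split => //; have [swap1 swap2] := sigma_swap m.+1.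
apply: (conj_swap pal_zS swap1 swap2).
by rewrite /= catA -wpowS -catA -conj_z catA -wpowSr.
Qed.

Definition q m := size (sig m.+1).
Definition p m := size (sig m).

Lemma size_central m : size (central m) + 2 = q m + p m.
Proof. by rewrite /q /p -size_cat (sigma_swap m).1 size_cat addnC. Qed.

Lemma qS m : q m.+1 = s m.+2 * q m + p m.
Proof. by rewrite /q sigmaSS size_cat size_wpow. Qed.

Lemma pS m : p m.+1 = q m.
Proof. by []. Qed.

Lemma q_gt0 m : 0 < q m.
Proof.
elim: m => [|m IHm]; first by rewrite /q sigma1 size_rcons.
by rewrite qS addn_gt0 muln_gt0 s_gt0 IHm.
Qed.

Lemma p_gt0 m : 0 < p m.
Proof. by case: m => // m; rewrite pS q_gt0. Qed.

(* [plen m k] is the length of the palindrome [wpow (sig m.+1) k ++ central m];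
   for [k <= s m.+2] these are exactly the palindromic prefix lengths. *)
Definition plen m k := k * q m + size (central m).

Lemma plenS m k : plen m k.+1 = plen m k + q m.
Proof. by rewrite /plen mulSn; lia. Qed.

Lemma plen_last m : plen m (s m.+2) = plen m.+1 0.
Proof. by rewrite /plen /= size_cat size_wpow. Qed.

Lemma plen0 m : plen m 0 = q m + p m - 2.
Proof. by rewrite /plen -size_central addnK. Qed.

Lemma plen_ge m k : q m <= (plen m k).+1.
Proof. by have := size_central m; have := p_gt0 m; rewrite /plen; lia. Qed.

Lemma leq_plen m i k : i <= k -> plen m i <= plen m k.
Proof. by move=> le_ik; rewrite leq_add2r leq_mul2r le_ik orbT. Qed.

Lemma plen_ltS m k : plen m k < plen m k.+1.
Proof. by rewrite plenS -addn1 leq_add2l q_gt0. Qed.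

Lemma plen0_lt m : plen m 0 < plen m.+1 0.
Proof.
by have := leq_plen m (s_gt0 m.+1); rewrite plenS -plen_last; have := q_gt0 m; lia.
Qed.

Lemma plen0_ge m : m <= plen m 0.
Proof. by elim: m => // m IHm; apply: leq_ltn_trans (plen0_lt m). Qed.

Hypothesis neq_ab : a != b.
Variable w : word T.
Hypothesis w_sturm : char_sturmian s a b w.

Definition is_prefix u := all (fun i => w i == nth a u i) (iota 0 (size u)).

Lemma is_prefixP u :
  reflect (forall i, i < size u -> w i = nth a u i) (is_prefix u).
Proof.
apply: (iffP allP) => [pre i lt_iu|pre i].
  by apply/eqP; apply: pre; rewrite mem_iota.
by rewrite mem_iota add0n => /pre/eqP.
Qed.

Lemma is_prefix_prefix u v : prefix u v -> is_prefix v -> is_prefix u.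
Proof.
case/prefixP => t ->{v} /is_prefixP pre_ut; apply/is_prefixP => i lt_iu.
by rewrite pre_ut ?size_cat ?nth_cat ?lt_iu //; apply: leq_trans lt_iu (leq_addr _ _).
Qed.

Lemma pal_prefix_rev u : is_prefix u -> rev u = u -> pal_prefix w (size u).
Proof.
move=> /is_prefixP pre_u pal_u; apply/pal_prefixP => i lt_iu.
rewrite !pre_u; [|lia|lia].
by rewrite -[in LHS]pal_u nth_rev //; congr nth; lia.
Qed.

Lemma prefix_sigmaS n : prefix (sig n.+1) (sig n.+2).
Proof.
rewrite sigmaSS; have := s_gt0 n.+1; case: (s n.+2) => // k _.
by rewrite wpowS -catA prefix_prefix.
Qed.

Lemma is_prefix_sigma n : is_prefix (sig n.+1).
Proof.
apply/is_prefixP => i lt_in; have [N sigN] := w_sturm i.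
have [_ ->] := sigN _ (leq_maxl N n.+1).
case: (maxn N n.+1) (leq_maxr N n.+1) => // k le_nk.
have /prefixP[t ->] : prefix (sig n.+1) (sig k.+1).
  exact: (homo_leq (@prefix_refl T) (@prefix_trans T) prefix_sigmaS).
by rewrite nth_cat lt_in; apply: set_nth_default.
Qed.

Lemma is_prefix_sigma_cat m : is_prefix (sig m.+2 ++ sig m.+1).
Proof.
suff pre : prefix (sig m.+2 ++ sig m.+1) (sig m.+3).
  exact: is_prefix_prefix pre (is_prefix_sigma m.+2).
rewrite [sig m.+3]sigmaSS; have := s_gt0 m.+2; case: (s m.+3) => // k _.
rewrite wpowS -catA prefix_catr // eqxx /=; case: k => [|k]; first by rewrite prefix_refl.
by rewrite wpowS -catA prefix_catl ?prefix_sigmaS.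
Qed.

Lemma sigma_cat_split m k : k <= s m.+2 ->
  sig m.+2 ++ sig m.+1 =
  (wpow (sig m.+1) k ++ central m) ++ (wpow (rev (sig m.+1)) (s m.+2 - k) ++ [:: ylet m; xlet m]).
Proof.
move=> le_ks; have [pal_z conj_z] := central_rev_conj m.
rewrite sigmaSS -catA (sigma_swap m).2 -(subnKC le_ks) wpowD -!catA.
by rewrite (catA (wpow _ (s m.+2 - k))) (wpow_conj _ conj_z) subnKC // -!catA.
Qed.

Lemma pal_prefix_plen m k : k <= s m.+2 -> pal_prefix w (plen m k).
Proof.
move=> le_ks; have [pal_z conj_z] := central_rev_conj m.
rewrite /plen -size_wpow -size_cat; apply: pal_prefix_rev; last exact: rev_wpow_conj.
apply: is_prefix_prefix (is_prefix_sigma_cat m).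
by rewrite (sigma_cat_split le_ks) prefix_prefix.
Qed.

Lemma rev_sigma_cons m : exists t, rev (sig m.+1) = xlet m :: t.
Proof.
have : rev (sig m.+1) ++ rev (sig m) = xlet m :: ylet m :: central m.
  by rewrite -rev_cat (sigma_swap m).2 rev_cat (central_rev_conj m).1.
have := q_gt0 m; rewrite /q -size_rev.
by case: (rev (sig m.+1)) => //= x t _ [-> _]; exists t.
Qed.

Lemma letter_plen_head m k : k <= s m.+2 ->
  w (plen m k) = head a (wpow (rev (sig m.+1)) (s m.+2 - k) ++ [:: ylet m; xlet m]).
Proof.
move=> le_ks; have /is_prefixP pre := is_prefix_sigma_cat m.
have size_pal : size (wpow (sig m.+1) k ++ central m) = plen m k.
  by rewrite size_cat size_wpow.
rewrite (sigma_cat_split le_ks) in pre; rewrite pre; last first.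
  by rewrite size_cat size_pal size_cat /=; lia.
by rewrite nth_cat size_pal ltnn subnn nth0.
Qed.

Lemma letter_plen m k : k < s m.+2 -> w (plen m k) = xlet m.
Proof.
move=> lt_ks; rewrite letter_plen_head ?(ltnW lt_ks) // -(subnSK lt_ks) wpowS.
by have [t ->] := rev_sigma_cons m.
Qed.

Lemma letter_plen_last m : w (plen m (s m.+2)) = ylet m.
Proof. by rewrite letter_plen_head // subnn. Qed.

(* The invariant of the induction on levels [(m, k)]: [pals_listed m k] lists
   the palindromic prefixes of length between [q m - 1] and [plen m k], and
   [letters_differ m k] is the hypothesis of [pal_prefix_gap] at [plen m k]. *)
Definition pals_listed m k := forall j, q m <= j.+1 -> j <= plen m k ->
  pal_prefix w j -> exists2 i, i <= k & j = plen m i.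

Definition letters_differ m k := forall j, plen m k < j + q m -> j < plen m k ->
  pal_prefix w j -> w j != w (plen m k).

Lemma plen_gap_of_letters_differ m k : k < s m.+2 -> letters_differ m k ->
  forall j, plen m k < j < plen m k.+1 -> ~~ pal_prefix w j.
Proof.
move=> lt_ks differ j; rewrite plenS.
by apply: pal_prefix_gap (pal_prefix_plen (ltnW lt_ks)) _ differ j; rewrite q_gt0 plen_ge.
Qed.

Lemma pals_listedS m k : k < s m.+2 -> pals_listed m k -> letters_differ m k ->
  pals_listed m k.+1.
Proof.
move=> lt_ks listed differ j le_qj le_jk pal_j.
have [le_j|lt_j] := leqP j (plen m k).
  by have [i le_ik ->] := listed j le_qj le_j pal_j; exists i => //; apply: leqW.
have [->|ne_j] := eqVneq j (plen m k.+1); first by exists k.+1.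
suff : plen m k < j < plen m k.+1 by move/(plen_gap_of_letters_differ lt_ks differ); rewrite pal_j.
by rewrite lt_j ltn_neqAle ne_j le_jk.
Qed.

Lemma letters_differS m k : pals_listed m k.+1 -> letters_differ m k.+1.
Proof.
move=> listed j lt_jq lt_jk pal_j; exfalso.
have := plen_ge m k; have := plenS m k => eq_kS le_qk.
have [i le_ik eq_j] := listed j (ltac:(lia)) (ltnW lt_jk) pal_j.
have [eq_ik|ne_ik] := eqVneq i k.+1; first by move: lt_jk; rewrite eq_j eq_ik ltnn.
have le_ik' : i <= k by rewrite -ltnS ltn_neqAle ne_ik le_ik.
by have := leq_plen m le_ik'; rewrite -eq_j; lia.
Qed.

Lemma letters_differ_next m : pals_listed m (s m.+2) -> letters_differ m.+1 0.
Proof.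
move=> listed j; rewrite -plen_last qS => lt_jq lt_j pal_j.
have := size_central m => size_z.
have [i le_iS eq_j] : exists2 i, i <= s m.+2 & j = plen m i.
  by apply: listed => //; [move: lt_jq; rewrite /plen; lia | exact: ltnW].
have lt_iS : i < s m.+2.
  by rewrite ltn_neqAle le_iS andbT; apply/eqP => eq_iS; move: lt_j; rewrite eq_j eq_iS ltnn.
rewrite eq_j letter_plen // letter_plen_last /xlet /ylet.
by case: ifP; rewrite // eq_sym.
Qed.

Lemma pals_listed_next m : pals_listed m (s m.+2) -> pals_listed m.+1 0.
Proof.
move=> listed j; rewrite -plen_last qS => le_qj le_j pal_j.
have := size_central m => size_z.
have le_q : q m <= j.+1.
  by apply: leq_trans le_qj; apply: leq_trans (leq_addr _ _); exact: leq_pmull.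
have [i le_iS eq_j] := listed j le_q le_j pal_j.
exists 0 => //; have [eq_iS|ne_iS] := eqVneq i (s m.+2); first by rewrite eq_j eq_iS plen_last.
have lt_iS : i < s m.+2 by rewrite ltn_neqAle ne_iS le_iS.
by have := leq_plen m lt_iS; rewrite plenS -eq_j /plen in le_j *; lia.
Qed.

Lemma pals_listed0 : pals_listed 0 0.
Proof.
have q0 : q 0 = s 1 by rewrite /q sigma1 size_rcons size_nseq prednK.
have size_z : size (central 0) = (s 1).-1 by rewrite size_nseq.
move=> j le_qj le_j _; exists 0 => //; apply/eqP; rewrite eqn_leq le_j.
by move: le_qj le_j; rewrite /plen q0 size_z; lia.
Qed.

Lemma letters_differ0 : letters_differ 0 0.
Proof.
have /is_prefixP pre := is_prefix_sigma 0.
have size_z : plen 0 0 = (s 1).-1 by rewrite /plen size_nseq.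
move=> j _; rewrite size_z => lt_j _; rewrite sigma1 size_rcons size_nseq in pre.
rewrite !pre; [|lia|lia].
by rewrite !nth_rcons !size_nseq lt_j ltnn eqxx nth_nseq lt_j.
Qed.

Lemma plen_invariant_level m : pals_listed m 0 -> letters_differ m 0 ->
  forall k, k <= s m.+2 -> pals_listed m k /\ (k < s m.+2 -> letters_differ m k).
Proof.
move=> listed0 differ0; elim=> [|k IHk] lt_ks; first by split.
have [listed differ] := IHk (ltnW lt_ks).
have listedS := pals_listedS lt_ks listed (differ lt_ks).
by split => // _; exact: letters_differS.
Qed.

Lemma plen_invariant m : pals_listed m 0 /\ letters_differ m 0.
Proof.
elim: m => [|m [listed differ]]; first by split; [exact: pals_listed0 | exact: letters_differ0].
have [listed_last _] := plen_invariant_level listed differ (leqnn _).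
by split; [exact: pals_listed_next | exact: letters_differ_next].
Qed.

Lemma plen_gap m k : k < s m.+2 ->
  forall j, plen m k < j < plen m k.+1 -> ~~ pal_prefix w j.
Proof.
move=> lt_ks; have [listed differ] := plen_invariant m.
have [_ differ_k] := plen_invariant_level listed differ (ltnW lt_ks).
exact: plen_gap_of_letters_differ lt_ks (differ_k lt_ks).
Qed.

Hypothesis w_inf : inf_pal w.

Lemma plen_locate M l : plen M 0 <= l ->
  exists m k, [/\ M <= m, k < s m.+2 & plen m k <= l < plen m k.+1].
Proof.
move=> le_Ml; have ex_m : exists m, plen m 0 <= l by exists M.
have bounded m : plen m 0 <= l -> m <= l by apply/leq_trans/plen0_ge.
case: (ex_maxnP ex_m bounded) => m le_ml max_m.
have lt_l : l < plen m (s m.+2).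
  by rewrite plen_last ltnNge; apply/negP => /max_m; rewrite ltnn.
have := leq_divM (l - size (central m)) (q m).
have := ltn_ceil (l - size (central m)) (q_gt0 m).
exists m, ((l - size (central m)) %/ q m); split; first exact: max_m.
  by rewrite ltn_divLR ?q_gt0 //; move: lt_l le_ml; rewrite /plen; lia.
by move: le_ml; rewrite /plen mulSn; lia.
Qed.

Lemma pal_len_plen M i : plen M 0 <= pal_len w i ->
  exists m k, [/\ M <= m, k < s m.+2, pal_len w i = plen m k
                & pal_len w i.+1 = plen m k.+1].
Proof.
move=> le_Mi; have [m [k [le_Mm lt_ks /andP[le_ki lt_ik]]]] := plen_locate le_Mi.
have eq_i : pal_len w i = plen m k.
  apply/eqP; rewrite eqn_leq le_ki andbT leqNgt; apply/negP => lt_ki.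
  have := @plen_gap m k lt_ks (pal_len w i).
  by rewrite lt_ki lt_ik (pal_len_pal w_inf) => /(_ isT).
exists m, k; split => //; rewrite pal_lenS eq_i.
by apply: (next_pal_eq w_inf); [exact: pal_prefix_plen | exact: plen_ltS | exact: plen_gap].
Qed.

Variable R : realType.
Local Notation top_ratio := (top_ratio R q p).

Lemma top_ratioE m : top_ratio m = (1 + (q m)%:R / (plen m 0)%:R)%R.
Proof. by rewrite plen0. Qed.

Lemma plen_ratio m k : 0 < plen m 0 ->
  ((plen m k.+1)%:R / (plen m k)%:R = 1 + (q m)%:R / (plen m k)%:R :> R)%R.
Proof.
move=> plen_gt0; rewrite plenS natrD mulrDl divff // pnatr_eq0 -lt0n.
exact: leq_trans plen_gt0 (leq_plen _ (leq0n k)).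
Qed.

Lemma plen_ratio_le m k : 0 < plen m 0 ->
  ((plen m k.+1)%:R / (plen m k)%:R <= top_ratio m)%R.
Proof.
move=> plen_gt0; have plenk_gt0 := leq_trans plen_gt0 (leq_plen m (leq0n k)).
rewrite plen_ratio // top_ratioE lerD2l ler_pM2l ?ltr0n ?q_gt0 //.
by rewrite lef_pV2 ?posrE ?ltr0n // ler_nat leq_plen.
Qed.

Lemma delta_sturm_le (c : R) M :
  (forall m, M <= m -> (top_ratio m <= c)%R) -> (delta R w <= c%:E)%E.
Proof.
move=> top_le; apply: (@limn_esup_le_eventually R _ _ (plen M.+1 0)) => i le_i.
have [m [k [le_Mm lt_ks eq_i eq_iS]]] := pal_len_plen (leq_trans le_i (pal_len_ge w_inf i)).
rewrite lee_fin eq_i eq_iS; apply: le_trans (top_le m (ltnW le_Mm)).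
by apply: plen_ratio_le; apply: leq_trans (plen0_ge m); apply: leq_trans le_Mm.
Qed.

Lemma delta_sturm_ge (c : R) :
  (forall M, exists2 m, M <= m & (c <= top_ratio m)%R) -> (c%:E <= delta R w)%E.
Proof.
move=> top_ge; apply: limn_esup_ge_frequently => N.
have [m le_m c_le] := top_ge (pal_len w N).+1.
have plen_gt0 : 0 < plen m 0 by apply: leq_trans (plen0_ge m); apply: leq_trans le_m.
have [i [eq_i eq_iS]] := pal_len_consecutive w_inf (pal_prefix_plen (leq0n _))
  (pal_prefix_plen (s_gt0 m.+1)) (plen_ltS m 0) (plen_gap (s_gt0 m.+1)).
exists i.
  rewrite leqNgt; apply/negP => /(homo_ltn ltn_trans (pal_len_lt w_inf)).
  by rewrite eq_i; have := plen0_ge m; lia.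
by rewrite lee_fin eq_i eq_iS plen_ratio // -top_ratioE.
Qed.

Lemma delta_sturm_dichotomy :
  ((((7 + Num.sqrt 13) / 6)%R)%:E <= delta R w \/ delta R w <= (Num.sqrt 3)%:E)%E.
Proof.
have [ge|le] := @top_ratio_dichotomy R (fun m => s m.+2) q p
  (fun m => s_gt0 m.+1) q_gt0 p_gt0 qS pS.
  by left; apply: delta_sturm_ge.
right; apply/lee_addgt0Pr => e e_gt0; have [N top_le] := le e e_gt0.
by rewrite -EFinD; apply: delta_sturm_le top_le.
Qed.

End SturmianWords.

Unset Implicit Arguments.
Theorem proposition7p7 (R : realType) :
  ~ (exists x : \bar R, Dprime R x /\
       ((Num.sqrt (3 : R))%:E < x < ((7 + Num.sqrt (13 : R)) / 6)%:E)%E).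
Proof.
case=> _ [[T [w [w_inf w_class ->]]] /andP[gt_sqrt3 lt_top]].
case: w_class => [[u [u_neq0 pal_u w_per]]|[s [a [b [s_gt0 neq_ab w_sturm]]]]].
  by move: gt_sqrt3; rewrite ltNge (delta_periodic_le u_neq0 pal_u w_per w_inf R).
have [ge_top|le_sqrt3] := delta_sturm_dichotomy s_gt0 neq_ab w_sturm w_inf R.
  by move: lt_top; rewrite ltNge ge_top.
by move: gt_sqrt3; rewrite ltNge le_sqrt3.
Qed.
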